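(* Let $k$ be a real division algebra, $\mathcal Z\subset k$ a discrete subring closed under conjugation, $(a_n)_{n\ge1}$ a sequence in $\mathcal Z$ and $x_0\in k$ with $x_n=T_{a_n}\cdots T_{a_1}x_0$ defined and $\|x_n\|<1$ for all $n\ge0$. Define $Q[\cdot]$ recursively by $P[a_n]=1$, $Q[a_n]=a_n$, and for $i<n$, $P[a_i,\dots,a_n]=Q[a_{i+1},\dots,a_n]$, $Q[a_i,\dots,a_n]=a_iQ[a_{i+1},\dots,a_n]+P[a_{i+1},\dots,a_n]$. Then $Q[a_i,\dots,a_n]\ne0$ for every $n$ and every $1\le i<n$.
   Context: $k\in\{\mathbb{R},\mathbb{C},\mathbb{H},\mathbb{O}\}$ with Euclidean norm $\|x\|^2=x\overline x$; $T_ax=x^{-1}-a$. Discrete means discrete in the Euclidean topology of $k\cong\mathbb{R}^d$. *)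

From Stdlib Require Import Reals.
Open Scope R_scope.

(* CD 0 = R, CD 1 = C, CD 2 = H, CD 3 = O (pairs of the previous level). *)
Fixpoint CD (n : nat) : Type :=
  match n with O => R | S m => (CD m * CD m)%type end.

Fixpoint cd_zero (n : nat) : CD n :=
  match n return CD n with O => 0 | S m => (cd_zero m, cd_zero m) end.

Fixpoint cd_one (n : nat) : CD n :=
  match n return CD n with O => 1 | S m => (cd_one m, cd_zero m) end.

Fixpoint cd_add (n : nat) : CD n -> CD n -> CD n :=
  match n return CD n -> CD n -> CD n with
  | O => Rplus
  | S m => fun x y => (cd_add m (fst x) (fst y), cd_add m (snd x) (snd y))
  end.

Fixpoint cd_opp (n : nat) : CD n -> CD n :=
  match n return CD n -> CD n with
  | O => Ropp
  | S m => fun x => (cd_opp m (fst x), cd_opp m (snd x))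
  end.

Definition cd_sub (n : nat) (x y : CD n) : CD n := cd_add n x (cd_opp n y).

Fixpoint cd_conj (n : nat) : CD n -> CD n :=
  match n return CD n -> CD n with
  | O => fun x => x
  | S m => fun x => (cd_conj m (fst x), cd_opp m (snd x))
  end.

(* Cayley-Dickson product: (a,b)(c,d) = (ac - conj(d) b, d a + b conj(c)) *)
Fixpoint cd_mul (n : nat) : CD n -> CD n -> CD n :=
  match n return CD n -> CD n -> CD n with
  | O => Rmult
  | S m => fun x y =>
      (cd_sub m (cd_mul m (fst x) (fst y)) (cd_mul m (cd_conj m (snd y)) (snd x)),
       cd_add m (cd_mul m (snd y) (fst x)) (cd_mul m (snd x) (cd_conj m (fst y))))
  end.

Fixpoint cd_scale (n : nat) (r : R) : CD n -> CD n :=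
  match n return CD n -> CD n with
  | O => fun x => r * x
  | S m => fun x => (cd_scale m r (fst x), cd_scale m r (snd x))
  end.

Fixpoint cd_nsq (n : nat) : CD n -> R :=
  match n return CD n -> R with
  | O => fun x => x * x
  | S m => fun x => cd_nsq m (fst x) + cd_nsq m (snd x)
  end.

Definition cd_norm (n : nat) (x : CD n) : R := sqrt (cd_nsq n x).

Definition cd_inv (n : nat) (x : CD n) : CD n :=
  cd_scale n (/ cd_nsq n x) (cd_conj n x).

Definition T (n : nat) (a x : CD n) : CD n := cd_sub n (cd_inv n x) a.

Definition is_subring (n : nat) (Z : CD n -> Prop) : Prop :=
  Z (cd_zero n) /\ Z (cd_one n) /\
  (forall x y, Z x -> Z y -> Z (cd_add n x y)) /\
  (forall x, Z x -> Z (cd_opp n x)) /\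
  (forall x y, Z x -> Z y -> Z (cd_mul n x y)).

Definition is_discrete (n : nat) (Z : CD n -> Prop) : Prop :=
  forall z, Z z -> exists eps, 0 < eps /\
    forall w, Z w -> cd_norm n (cd_sub n w z) < eps -> w = z.

Definition conj_closed (n : nat) (Z : CD n -> Prop) : Prop :=
  forall z, Z z -> Z (cd_conj n z).

(* PQ d a i m = (P[a_i,...,a_{i+m}], Q[a_i,...,a_{i+m}]) *)
Fixpoint PQ (d : nat) (a : nat -> CD d) (i m : nat) : CD d * CD d :=
  match m with
  | O => (cd_one d, a i)
  | S m' => let pq := PQ d a (S i) m' in
            (snd pq, cd_add d (cd_mul d (a i) (snd pq)) (fst pq))
  end.

Definition Qc (d : nat) (a : nat -> CD d) (i n : nat) : CD d := snd (PQ d a i (n - i)).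

From Stdlib Require Import Reals Lra Lia.
Open Scope R_scope.

(* Write u_k = x_k^-1 and E_k = u_k P[a_(k+1),...,a_n] - Q[a_(k+1),...,a_n].
   Since u_k - a_(k+1) = x_(k+1), the recursion for P and Q gives
   E_k = -x_(k+1) E_(k+1), so by multiplicativity of the norm and induction
   ||E_k|| < 1.  If Q[a_i,...,a_n] = 0 then E_(i-1) = u_(i-1) Q[a_(i+1),...,a_n],
   whence ||Q[a_(i+1),...,a_n]|| < ||x_(i-1)|| < 1.  A discrete subring meets
   the open unit ball only in 0 (the powers of a nonzero such element would
   accumulate at 0), so Q[a_(i+1),...,a_n] = 0 and then P[a_(i+1),...,a_n] = 0
   too, but P and Q never vanish together. *)

Lemma cd_nsq_ge0 n (x : CD n) : 0 <= cd_nsq n x.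
Proof.
  induction n as [|n IHn]; simpl.
  - apply Rle_0_sqr.
  - apply Rplus_le_le_0_compat; apply IHn.
Qed.

Lemma cd_nsq_eq0 n (x : CD n) : cd_nsq n x = 0 -> x = cd_zero n.
Proof.
  induction n as [|n IHn]; simpl; intros Hx.
  - change (CD 0) with R in x; nra.
  - destruct x as [x1 x2]; simpl in Hx.
    pose proof (cd_nsq_ge0 n x1); pose proof (cd_nsq_ge0 n x2).
    rewrite (IHn x1), (IHn x2) by lra; reflexivity.
Qed.

Lemma cd_nsq_zero n : cd_nsq n (cd_zero n) = 0.
Proof. induction n as [|n IHn]; simpl; [ring | rewrite IHn; ring]. Qed.

Lemma cd_nsq_one n : cd_nsq n (cd_one n) = 1.
Proof. induction n as [|n IHn]; simpl; [ring | rewrite IHn, cd_nsq_zero; ring]. Qed.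

Lemma cd_one_neq0 n : cd_one n <> cd_zero n.
Proof. intros H; pose proof (cd_nsq_one n) as H1; rewrite H, cd_nsq_zero in H1; lra. Qed.

Lemma cd_nsq_lt1 n (x : CD n) : cd_norm n x < 1 -> cd_nsq n x < 1.
Proof.
  unfold cd_norm; intros Hx.
  destruct (Rlt_or_le (cd_nsq n x) 1) as [Hlt | Hge]; [exact Hlt |].
  apply sqrt_le_1_alt in Hge; rewrite sqrt_1 in Hge; lra.
Qed.

Lemma cd_add0r n (x : CD n) : cd_add n (cd_zero n) x = x.
Proof.
  induction n as [|n IHn]; simpl; [ring |].
  destruct x; simpl; rewrite !IHn; reflexivity.
Qed.

Lemma cd_subr0 n (x : CD n) : cd_sub n x (cd_zero n) = x.
Proof.
  unfold cd_sub; induction n as [|n IHn]; simpl; [ring |].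
  destruct x; simpl; rewrite !IHn; reflexivity.
Qed.

Lemma cd_subrD n (u v w : CD n) :
  cd_sub n u (cd_add n v w) = cd_sub n (cd_sub n u v) w.
Proof.
  unfold cd_sub; induction n as [|n IHn]; simpl; [ring |].
  rewrite !IHn; reflexivity.
Qed.

Lemma cd_nsq_distrC n (u v : CD n) :
  cd_nsq n (cd_sub n u v) = cd_nsq n (cd_sub n v u).
Proof.
  unfold cd_sub; induction n as [|n IHn]; simpl; [ring |].
  rewrite (IHn (fst u)), (IHn (snd u)); reflexivity.
Qed.

Lemma cd_scale1 n (x : CD n) : cd_scale n 1 x = x.
Proof.
  induction n as [|n IHn]; simpl; [ring |].
  destruct x; simpl; rewrite !IHn; reflexivity.
Qed.

Lemma PQ_mem n (Z : CD n -> Prop) (a : nat -> CD n) i :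
  is_subring n Z -> (forall j, (i <= j)%nat -> Z (a j)) ->
  forall m, Z (fst (PQ n a i m)) /\ Z (snd (PQ n a i m)).
Proof.
  intros (_ & HZ1 & HZadd & _ & HZmul) Ha m; revert i Ha.
  induction m as [|m IHm]; intros i Ha; simpl.
  - split; [exact HZ1 | apply Ha; lia].
  - destruct (IHm (S i)) as [HP HQ]; [intros j Hj; apply Ha; lia |].
    split; [exact HQ |].
    apply HZadd; [apply HZmul; [apply Ha; lia | exact HQ] | exact HP].
Qed.

Section DivisionAlgebra.

Variable d : nat.
Hypothesis Hd : (d <= 3)%nat.

(* Expanding into at most 8 real coordinates turns each identity below into a
   polynomial identity; multiplicativity of the norm and left alternativity
   fail beyond the octonions. *)
Ltac cd_coordinates :=
  intros; destruct d as [|[|[|[|?]]]]; [| | | | lia];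
  repeat match goal with x : CD (S _) |- _ => destruct x end;
  repeat match goal with x : CD O |- _ => change (CD O) with R in x end;
  simpl; unfold cd_sub; simpl;
  repeat match goal with |- (_, _) = (_, _) => f_equal end;
  ring.

Lemma cd_nsq_mul (x y : CD d) :
  cd_nsq d (cd_mul d x y) = cd_nsq d x * cd_nsq d y.
Proof. cd_coordinates. Qed.

Lemma cd_left_alternative (c : R) (x y : CD d) :
  cd_mul d x (cd_mul d (cd_scale d c (cd_conj d x)) y)
  = cd_scale d (c * cd_nsq d x) y.
Proof. cd_coordinates. Qed.

Lemma cd_mulr0 (x : CD d) : cd_mul d x (cd_zero d) = cd_zero d.
Proof. cd_coordinates. Qed.

Lemma cd_mulr1 (x : CD d) : cd_mul d x (cd_one d) = x.
Proof. cd_coordinates. Qed.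

Lemma cd_mulrBl (u v w : CD d) :
  cd_mul d (cd_sub d u v) w = cd_sub d (cd_mul d u w) (cd_mul d v w).
Proof. cd_coordinates. Qed.

Lemma cd_mulrBr (u v w : CD d) :
  cd_mul d u (cd_sub d v w) = cd_sub d (cd_mul d u v) (cd_mul d u w).
Proof. cd_coordinates. Qed.

Lemma cd_mulVK (x y : CD d) : x <> cd_zero d -> cd_mul d x (cd_mul d (cd_inv d x) y) = y.
Proof.
  intros Hx; unfold cd_inv; rewrite cd_left_alternative, Rinv_l.
  - apply cd_scale1.
  - intros H0; exact (Hx (cd_nsq_eq0 d x H0)).
Qed.

Fixpoint cd_pow (z : CD d) (k : nat) : CD d :=
  match k with O => cd_one d | S k => cd_mul d z (cd_pow z k) end.

Lemma cd_nsq_pow (z : CD d) k : cd_nsq d (cd_pow z k) = cd_nsq d z ^ k.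
Proof.
  induction k as [|k IHk]; simpl; [apply cd_nsq_one |].
  rewrite cd_nsq_mul, IHk; reflexivity.
Qed.

Section DiscreteSubring.

Variable Z : CD d -> Prop.
Hypothesis HZring : is_subring d Z.
Hypothesis HZdisc : is_discrete d Z.

Lemma subring_pow_mem (z : CD d) k : Z z -> Z (cd_pow z k).
Proof.
  destruct HZring as (_ & HZ1 & _ & _ & HZmul).
  intros Hz; induction k as [|k IHk]; simpl; auto.
Qed.

Lemma discrete_subring_nsq_lt1 (z : CD d) : Z z -> cd_nsq d z < 1 -> z = cd_zero d.
Proof.
  intros Hz Hlt.
  destruct HZring as (HZ0 & _).
  destruct (HZdisc _ HZ0) as (eps & Heps & Hiso0).
  pose proof (cd_nsq_ge0 d z) as Hge.
  destruct (pow_lt_1_zero (cd_nsq d z)) with (y := eps * eps) as [N HN];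
    [rewrite Rabs_right; lra | nra |].
  specialize (HN N (le_n N)).
  rewrite Rabs_right in HN by (apply Rle_ge, pow_le; lra).
  assert (HzN : cd_pow z N = cd_zero d).
  { apply Hiso0; [apply subring_pow_mem; exact Hz |].
    unfold cd_norm; rewrite cd_subr0, cd_nsq_pow.
    rewrite <- (sqrt_square eps) by lra.
    apply sqrt_lt_1_alt; split; [apply pow_le |]; lra. }
  apply cd_nsq_eq0; destruct (Req_dec (cd_nsq d z) 0) as [H0 | Hnz]; [exact H0 |].
  exfalso; apply (pow_nonzero _ N Hnz).
  rewrite <- cd_nsq_pow, HzN; apply cd_nsq_zero.
Qed.

End DiscreteSubring.

Lemma PQ_succ_eq0 (a : nat -> CD d) i m :
  snd (PQ d a i (S m)) = cd_zero d -> snd (PQ d a (S i) m) = cd_zero d ->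
  PQ d a (S i) m = (cd_zero d, cd_zero d).
Proof.
  simpl; intros HQ HQ'; rewrite HQ', cd_mulr0, cd_add0r in HQ.
  rewrite (surjective_pairing (PQ d a (S i) m)), HQ, HQ'; reflexivity.
Qed.

Lemma PQ_neq0 (a : nat -> CD d) i m : PQ d a i m <> (cd_zero d, cd_zero d).
Proof.
  revert i; induction m as [|m IHm]; intros i H.
  - injection H; intros _; apply cd_one_neq0.
  - apply (IHm (S i)), (PQ_succ_eq0 a i m).
    + rewrite H; reflexivity.
    + change (fst (PQ d a i (S m)) = cd_zero d); rewrite H; reflexivity.
Qed.

Definition PQ_error (a : nat -> CD d) (u : CD d) i m : CD d :=
  cd_sub d (cd_mul d u (fst (PQ d a i m))) (snd (PQ d a i m)).

Lemma PQ_error0 (a : nat -> CD d) u i : PQ_error a u i 0 = cd_sub d u (a i).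
Proof. unfold PQ_error; simpl; rewrite cd_mulr1; reflexivity. Qed.

Lemma PQ_error_succ (a : nat -> CD d) u y i m :
  y <> cd_zero d -> cd_sub d u (a i) = y ->
  cd_nsq d (PQ_error a u i (S m)) = cd_nsq d y * cd_nsq d (PQ_error a (cd_inv d y) (S i) m).
Proof.
  intros Hy Huy; unfold PQ_error; simpl.
  set (P := fst (PQ d a (S i) m)); set (Q := snd (PQ d a (S i) m)).
  rewrite cd_subrD, <- cd_mulrBl, Huy.
  rewrite <- (cd_mulVK y P Hy) at 1.
  rewrite <- cd_mulrBr, cd_nsq_mul, cd_nsq_distrC; reflexivity.
Qed.

Section Orbit.

Variables a x : nat -> CD d.
Hypothesis Hx0 : forall n, x n <> cd_zero d.
Hypothesis Hxrec : forall n, x (S n) = T d (a (S n)) (x n).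
Hypothesis Hxlt : forall n, cd_norm d (x n) < 1.

Lemma PQ_error_orbit_lt1 m k : cd_nsq d (PQ_error a (cd_inv d (x k)) (S k) m) < 1.
Proof.
  revert k; induction m as [|m IHm]; intros k.
  - rewrite PQ_error0; fold (T d (a (S k)) (x k)); rewrite <- Hxrec.
    apply cd_nsq_lt1, Hxlt.
  - rewrite (PQ_error_succ a _ _ _ _ (Hx0 (S k))) by (rewrite Hxrec; reflexivity).
    pose proof (cd_nsq_lt1 d _ (Hxlt (S k))); pose proof (IHm (S k)).
    pose proof (cd_nsq_ge0 d (x (S k))).
    pose proof (cd_nsq_ge0 d (PQ_error a (cd_inv d (x (S k))) (S (S k)) m)).
    nra.
Qed.

Lemma PQ_snd_next_nsq_lt1 k m :
  snd (PQ d a (S k) (S m)) = cd_zero d -> cd_nsq d (snd (PQ d a (S (S k)) m)) < 1.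
Proof.
  intros HQ; pose proof (PQ_error_orbit_lt1 (S m) k) as Herr.
  unfold PQ_error in Herr; simpl in HQ, Herr; rewrite HQ, cd_subr0 in Herr.
  set (Q := snd (PQ d a (S (S k)) m)) in Herr |- *.
  rewrite <- (cd_mulVK (x k) Q (Hx0 k)), cd_nsq_mul.
  pose proof (cd_nsq_lt1 d _ (Hxlt k)); pose proof (cd_nsq_ge0 d (x k)).
  pose proof (cd_nsq_ge0 d (cd_mul d (cd_inv d (x k)) Q)); nra.
Qed.

End Orbit.

End DivisionAlgebra.

Theorem lemma2p5 (d : nat) (Hd : (d <= 3)%nat)
  (Z : CD d -> Prop) (HZring : is_subring d Z) (HZdisc : is_discrete d Z)
  (HZconj : conj_closed d Z)
  (a : nat -> CD d) (Ha : forall n, (1 <= n)%nat -> Z (a n))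
  (x : nat -> CD d)
  (Hx0 : forall n, x n <> cd_zero d)
  (Hxrec : forall n, x (S n) = T d (a (S n)) (x n))
  (Hxlt : forall n, cd_norm d (x n) < 1) :
  forall n i, (1 <= i)%nat -> (i < n)%nat -> Qc d a i n <> cd_zero d.
Proof.
  intros n [|k] Hi Hin HQ; [lia |].
  unfold Qc in HQ; replace (n - S k)%nat with (S (n - S (S k))) in HQ by lia.
  apply (PQ_neq0 d Hd a (S (S k)) (n - S (S k))), (PQ_succ_eq0 d Hd a (S k) _ HQ).
  apply (discrete_subring_nsq_lt1 d Hd Z HZring HZdisc).
  - apply (PQ_mem d Z a (S (S k)) HZring); intros j Hj; apply Ha; lia.
  - exact (PQ_snd_next_nsq_lt1 d Hd a x Hx0 Hxrec Hxlt k _ HQ).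
Qed.
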